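(* For every integer $m\geq 2$ and every integer $n\geq 2$, the graph $mL_n$ (the disjoint union of $m$ copies of the ladder $L_n$) is $C_4$-supermagic.
   Context: All graphs are finite and simple. For a graph $H$, a graph $G=(V,E)$ has an $H$-covering if every edge of $G$ belongs to a subgraph of $G$ isomorphic to $H$. For such $G$, an $H$-magic labeling is a bijection $\lambda: V\cup E\to\{1,2,\dots,|V|+|E|\}$ for which there is a constant $c$ such that for every subgraph $H'=(V',E')$ of $G$ isomorphic to $H$, $\sum_{v\in V'}\lambda(v)+\sum_{e\in E'}\lambda(e)=c$. It is $H$-supermagic if moreover $\{\lambda(v):v\in V\}=\{1,\dots,|V|\}$; $G$ is $H$-supermagic if it admits such a labeling. $C_k$ is the cycle of length $k$. $mG$ denotes the disjoint union of $m$ copies of $G$. The ladder $L_n=P_n\times P_2$ ($n\ge2$) has vertices $u_i,v_i$ ($1\le i\le n$) and edges $u_iv_i$ ($1\le i\le n$), $u_iu_{i+1}$ and $v_iv_{i+1}$ ($1\le i\le n-1$). *)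

From mathcomp Require Import all_boot.
Set Implicit Arguments. Unset Strict Implicit. Unset Printing Implicit Defensive.

(* A simple graph is given by a finite vertex type V and an adjacency
   relation adj : rel V (assumed symmetric and irreflexive for the concrete
   graphs below). *)
Definition edges (V : finType) (adj : rel V) : {set {set V}} :=
  [set [set x; y] | x in V, y in V & adj x y].

Definition iso_subgraph (W : finType) (adjH : rel W) (V : finType) (adj : rel V)
  (V' : {set V}) (E' : {set {set V}}) : Prop :=
  exists f : W -> V,
    [/\ injective f,
        V' = f @: [set: W],
        E' = [set [set f x; f y] | x in W, y in W & adjH x y]
      & E' \subset edges adj].

Definition H_covering (W : finType) (adjH : rel W) (V : finType) (adj : rel V) : Prop :=
  forall e, e \in edges adj ->
    exists V' E', iso_subgraph adjH adj V' E' /\ e \in E'.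

Definition elems (V : finType) (adj : rel V) : {set V + {set V}} :=
  [set inl v | v : V] :|: [set inr e | e in edges adj].

Definition total_labeling (V : finType) (adj : rel V) (lam : V + {set V} -> nat) : Prop :=
  {in elems adj &, injective lam} /\
  (forall x, x \in elems adj -> 1 <= lam x <= #|V| + #|edges adj|).

Definition H_magic_labeling (W : finType) (adjH : rel W) (V : finType) (adj : rel V)
  (lam : V + {set V} -> nat) : Prop :=
  total_labeling adj lam /\
  exists c : nat, forall V' E', iso_subgraph adjH adj V' E' ->
    \sum_(v in V') lam (inl v) + \sum_(e in E') lam (inr e) = c.

Definition H_supermagic_labeling (W : finType) (adjH : rel W) (V : finType) (adj : rel V)
  (lam : V + {set V} -> nat) : Prop :=
  H_magic_labeling adjH adj lam /\
  [seq lam (inl v) | v <- enum V] =i iota 1 #|V|.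

Definition H_supermagic (W : finType) (adjH : rel W) (V : finType) (adj : rel V) : Prop :=
  H_covering adjH adj /\ exists lam, H_supermagic_labeling adjH adj lam.

Definition cycle_adj (k : nat) : rel 'I_k :=
  fun i j => (val j == (val i).+1 %% k) || (val i == (val j).+1 %% k).

(* The ladder L_n = P_n x P_2 on 'I_n * bool: (i,false) = u_{i+1},
   (i,true) = v_{i+1}. *)
Definition ladder_adj (n : nat) : rel ('I_n * bool) :=
  fun x y => ((val x.1 == val y.1) && (x.2 != y.2)) ||
             ((x.2 == y.2) && (((val x.1).+1 == val y.1) || ((val y.1).+1 == val x.1))).

Definition copies_adj (m : nat) (V : finType) (adj : rel V) : rel ('I_m * V) :=
  fun x y => (x.1 == y.1) && adj x.2 y.2.

From mathcomp Require Import all_boot zify.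
Set Implicit Arguments. Unset Strict Implicit. Unset Printing Implicit Defensive.

(* Number the rungs of the m ladders consecutively by p = j + m i (copy j, rung i),
   so 0 <= p < N = mn, and let Q = m(n-1) be the number of rails on each side.
   Label u-vertex p by p+1 and v-vertex p by 2N-p, the rung p by 2N+p+1, and the
   rail from rung p to rung p+m by 3N+Q-p on the u-side and 3N+2Q-p on the v-side.
   Vertices get exactly 1..2N and edges exactly 2N+1..2N+(N+2Q).  The only 4-cycles
   of a ladder are its squares; in the square on rungs p and p+m the vertex labels
   sum to 4N+2, while the increase of the rung labels with p cancels the decrease
   of the rail labels, so every square has weight 14N+3Q+m+4. *)

Lemma leq_card_of_labels (T : finType) (A : {set T}) (f : T -> nat) a K :
  (forall k, k < K -> exists2 x, x \in A & f x = a + k) -> K <= #|A|.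
Proof.
move=> onto; rewrite -(size_iota a K) cardE -(size_map f).
apply: uniq_leq_size (iota_uniq a K) _ => i /[!mem_iota] /andP[ai iK].
have [x xA fx] := onto (i - a) (ltac:(lia)); rewrite -(subnKC ai) -fx.
by apply: map_f; rewrite mem_enum.
Qed.

Lemma image_iota_of_inj (V : finType) (g : V -> nat) :
  injective g -> (forall v, 1 <= g v <= #|V|) -> [seq g v | v <- enum V] =i iota 1 #|V|.
Proof.
move=> g_inj g_range.
have sub : {subset [seq g v | v <- enum V] <= iota 1 #|V|}.
  by move=> _ /mapP[v _ ->]; rewrite mem_iota addnC addn1 ltnS.
have [] := uniq_min_size _ sub => //; first by rewrite map_inj_uniq ?enum_uniq.
by rewrite size_iota size_map -cardE.
Qed.

Lemma total_labeling_split (V : finType) (adj : rel V) (lam : V + {set V} -> nat) :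
  injective (lam \o inl) -> (forall v, 1 <= lam (inl v) <= #|V|) ->
  {in edges adj &, injective (lam \o inr)} ->
  (forall e : {set V}, e \in edges adj -> #|V| < lam (inr e) <= #|V| + #|edges adj|) ->
  total_labeling adj lam.
Proof.
move=> inl_inj inl_range inr_inj inr_range.
have vertex_lt_edge v e : e \in edges adj -> lam (inl v) < lam (inr e).
  move=> eE; have /andP[_ le_v] := inl_range v; have /andP[lt_e _] := inr_range _ eE.
  exact: leq_ltn_trans le_v lt_e.
split.
  move=> z1 z2 /setUP[/imsetP[v1 _ ->]|/imsetP[e1 e1E ->]]
               /setUP[/imsetP[v2 _ ->]|/imsetP[e2 e2E ->]] eq12.
  - by rewrite (inl_inj _ _ eq12).
  - by have := vertex_lt_edge v1 _ e2E; rewrite eq12 ltnn.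
  - by have := vertex_lt_edge v2 _ e1E; rewrite eq12 ltnn.
  - by rewrite (inr_inj _ _ e1E e2E eq12).
move=> _ /setUP[/imsetP[v _ ->]|/imsetP[e eE ->]].
  by have /andP[-> /leq_trans->] := inl_range v; rewrite ?leq_addr.
have /andP[lt_e ->] := inr_range _ eE.
by rewrite andbT (leq_ltn_trans _ lt_e).
Qed.

Local Notation o k := (@Ordinal 4 k isT).

Lemma ord4P (k : 'I_4) : [\/ k = o 0, k = o 1, k = o 2 | k = o 3].
Proof.
case: k => [[|[|[|[|k]]]] lt_k4] //.
- by apply: Or41; apply: val_inj.
- by apply: Or42; apply: val_inj.
- by apply: Or43; apply: val_inj.
- by apply: Or44; apply: val_inj.
Qed.

Lemma sum_set4 (T : finType) (F : T -> nat) (a b c d : T) :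
  uniq [:: a; b; c; d] -> \sum_(x in [set a; b; c; d]) F x = F a + F b + F c + F d.
Proof.
move=> abcd; rewrite (eq_bigl (fun x => x \in [:: a; b; c; d])); last first.
  by move=> x; rewrite !inE -!orbA.
by rewrite -big_uniq // unlock /= !addnA addn0.
Qed.

Lemma card_set4 (T : finType) (a b c d : T) :
  uniq [:: a; b; c; d] -> #|[set a; b; c; d]| = 4.
Proof.
move=> abcd; rewrite -[4]/(size [:: a; b; c; d]) -(card_uniqP abcd).
by apply: eq_card => x; rewrite !inE -!orbA.
Qed.

Section Cycle4.

Variables (T : finType) (f : 'I_4 -> T).
Hypothesis f_inj : injective f.

Definition c4_edges : {set {set T}} :=
  [set [set f x; f y] | x in 'I_4, y in 'I_4 & cycle_adj x y].

Lemma c4_verticesE : f @: [set: 'I_4] = [set f (o 0); f (o 1); f (o 2); f (o 3)].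
Proof.
apply/setP => x; apply/imsetP/idP => [[k _ ->]|].
  by case: (ord4P k) => ->; rewrite !inE eqxx ?orbT.
rewrite !inE -!orbA => /or4P[] /eqP->;
  [exists (o 0) | exists (o 1) | exists (o 2) | exists (o 3)] => //.
Qed.

Lemma c4_edgesE : c4_edges =
  [set [set f (o 0); f (o 1)]; [set f (o 1); f (o 2)];
       [set f (o 2); f (o 3)]; [set f (o 3); f (o 0)]].
Proof.
apply/setP => e; apply/imset2P/idP => [[x y _]|].
  rewrite inE => /andP[_ xy] ->; rewrite !inE.
  by case: (ord4P x) (ord4P y) xy => -> [] -> //= _; rewrite ?eqxx ?orbT // setUC eqxx ?orbT.
rewrite !inE -!orbA => /or4P[] /eqP->;
  [exists (o 0) (o 1) | exists (o 1) (o 2) | exists (o 2) (o 3) | exists (o 3) (o 0)];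
  by rewrite ?inE.
Qed.

Lemma c4_vertices_uniq : uniq [:: f (o 0); f (o 1); f (o 2); f (o 3)].
Proof. by rewrite /= !inE !(inj_eq f_inj). Qed.

Lemma c4_edges_uniq :
  uniq [:: [set f (o 0); f (o 1)]; [set f (o 1); f (o 2)];
           [set f (o 2); f (o 3)]; [set f (o 3); f (o 0)]].
Proof.
have set2_neq a b c d : ~~ ((f a \in [set f c; f d]) && (f b \in [set f c; f d])) ->
    [set f a; f b] != [set f c; f d].
  by apply: contra => /eqP eq_ab_cd; rewrite -eq_ab_cd !inE !eqxx orbT.
by rewrite /= !inE !negb_or !set2_neq // !inE !(inj_eq f_inj).
Qed.

Lemma card_c4_vertices : #|f @: [set: 'I_4]| = 4.
Proof. by rewrite c4_verticesE card_set4 ?c4_vertices_uniq. Qed.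

Lemma card_c4_edges : #|c4_edges| = 4.
Proof. by rewrite c4_edgesE card_set4 ?c4_edges_uniq. Qed.

Lemma sum_c4_vertices (F : T -> nat) :
  \sum_(v in f @: [set: 'I_4]) F v = F (f (o 0)) + F (f (o 1)) + F (f (o 2)) + F (f (o 3)).
Proof. by rewrite c4_verticesE sum_set4 ?c4_vertices_uniq. Qed.

Lemma sum_c4_edges (F : {set T} -> nat) :
  \sum_(e in c4_edges) F e =
  F [set f (o 0); f (o 1)] + F [set f (o 1); f (o 2)] +
  F [set f (o 2); f (o 3)] + F [set f (o 3); f (o 0)].
Proof. by rewrite c4_edgesE sum_set4 ?c4_edges_uniq. Qed.

End Cycle4.

Section Ladders.

Variables m n : nat.

Local Notation vertex := ('I_m * ('I_n * bool))%type.
Local Notation adj := (@copies_adj m _ (@ladder_adj n)).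

Lemma vertex_eqE (x y : vertex) :
  (x == y) = [&& (x.1 : nat) == y.1, (x.2.1 : nat) == y.2.1 & x.2.2 == y.2.2].
Proof. by case: x => j [i b]; case: y => j' [i' b']. Qed.

Lemma adjE (x y : vertex) : adj x y =
  ((x.1 : nat) == y.1) && (((x.2.1 : nat) == y.2.1) && (x.2.2 != y.2.2) ||
    (x.2.2 == y.2.2) && (((x.2.1 : nat).+1 == y.2.1) || ((y.2.1 : nat).+1 == x.2.1))).
Proof. by []. Qed.

Lemma edgesP (e : {set vertex}) :
  reflect (exists x y, adj x y /\ e = [set x; y]) (e \in edges adj).
Proof.
apply: (iffP imset2P) => [[x y _]|[x [y [xy ->]]]].
  by rewrite inE => /andP[_ xy] ->; exists x, y.
by exists x y; rewrite ?inE.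
Qed.

Lemma edge_adj (x y : vertex) : [set x; y] \in edges adj -> adj x y.
Proof.
case/edgesP=> x' [y' [x'y' eq_xy]].
have: x \in [set x'; y'] by rewrite -eq_xy !inE eqxx.
have: y \in [set x'; y'] by rewrite -eq_xy !inE eqxx orbT.
have: x' \in [set x; y] by rewrite eq_xy !inE eqxx.
have: y' \in [set x; y] by rewrite eq_xy !inE eqxx orbT.
move: x'y'; rewrite !inE !vertex_eqE !adjE; lia.
Qed.

(* Each edge has exactly one orientation as an arc: rungs point from the u-side
   to the v-side, rails point towards the higher index. *)
Definition arc (x y : vertex) : bool :=
  ((x.1 : nat) == y.1) && ([&& (x.2.1 : nat) == y.2.1, ~~ x.2.2 & y.2.2] ||
    (x.2.2 == y.2.2) && ((x.2.1 : nat).+1 == y.2.1)).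

Lemma arc_adj (x y : vertex) : arc x y -> adj x y.
Proof. rewrite adjE /arc; lia. Qed.

Lemma adj_arc (x y : vertex) : adj x y -> arc x y \/ arc y x.
Proof. rewrite adjE /arc; lia. Qed.

Lemma arc_neq (x y : vertex) : arc x y -> x != y.
Proof. rewrite vertex_eqE /arc; lia. Qed.

Lemma arc_asym (x y : vertex) : arc x y -> ~~ arc y x.
Proof. rewrite /arc; lia. Qed.

Lemma edge_of_arc (x y : vertex) : arc x y -> [set x; y] \in edges adj.
Proof. by move=> xy; apply/edgesP; exists x, y; split => //; apply: arc_adj. Qed.

Lemma edge_arc (e : {set vertex}) : e \in edges adj ->
  exists x y, arc x y /\ e = [set x; y].
Proof.
case/edgesP=> x [y [/adj_arc [xy|yx] ->]]; first by exists x, y.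
by exists y, x; rewrite setUC.
Qed.

Section Square.

Variables (j : 'I_m) (i : nat) (lt_i1n : i.+1 < n).

(* The corners (i, u), (i+1, u), (i+1, v), (i, v) of copy j, in cyclic order. *)
Definition corner (k : 'I_4) : vertex :=
  (j, (if (k : nat) \in [:: 1; 2] then Ordinal lt_i1n else Ordinal (ltnW lt_i1n), 1 < k)).

Definition square : {set vertex} := corner @: [set: 'I_4].

Lemma corner_inj : injective corner.
Proof.
move=> a b /eqP; rewrite vertex_eqE.
by case: (ord4P a) (ord4P b) => -> [] -> //=; lia.
Qed.

Lemma mem_square (x : vertex) :
  (x \in square) = ((x.1 : nat) == j) && (i <= x.2.1 <= i.+1).
Proof.
rewrite /square c4_verticesE !inE !vertex_eqE /=; lia.
Qed.

Lemma corner_adj (a b : 'I_4) : adj (corner a) (corner b) = cycle_adj a b.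
Proof.
by rewrite adjE /cycle_adj; case: (ord4P a) (ord4P b) => -> [] -> /=; rewrite eqxx; lia.
Qed.

Lemma square_iso : iso_subgraph (@cycle_adj 4) adj square (c4_edges corner).
Proof.
exists corner; split => //; first exact: corner_inj.
apply/subsetP => e /imset2P[a b _]; rewrite inE => /andP[_ ab] ->.
by apply/edgesP; exists (corner a), (corner b); rewrite corner_adj.
Qed.

Lemma square_edge (x y : vertex) :
  x \in square -> y \in square -> adj x y -> [set x; y] \in c4_edges corner.
Proof.
move=> /imsetP[a _ ->] /imsetP[b _ ->]; rewrite corner_adj => ab.
by apply/imset2P; exists a b; rewrite ?inE.
Qed.

End Square.

Lemma ladder_c4_in_square (p : 'I_4 -> 'I_n * bool) : injective p ->
  (forall a b, cycle_adj a b -> ladder_adj (p a) (p b)) ->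
  exists2 i, i.+1 < n & forall k, i <= (p k).1 <= i.+1.
Proof.
move=> p_inj p_adj.
suff [i lt_i1n sq] : exists2 i, i.+1 < n & [&& i <= (p (o 0)).1 <= i.+1,
    i <= (p (o 1)).1 <= i.+1, i <= (p (o 2)).1 <= i.+1 & i <= (p (o 3)).1 <= i.+1].
  by exists i => // k; case/and4P: sq; case: (ord4P k) => ->.
have := c4_vertices_uniq p_inj.
have := p_adj (o 0) (o 1) isT; have := p_adj (o 1) (o 2) isT.
have := p_adj (o 2) (o 3) isT; have := p_adj (o 3) (o 0) isT.
case: (p (o 0)) (p (o 1)) (p (o 2)) (p (o 3)) => [i0 b0] [i1 b1] [i2 b2] [i3 b3].
have := ltn_ord i0; have := ltn_ord i1; have := ltn_ord i2; have := ltn_ord i3.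
rewrite /ladder_adj /= !inE !xpair_eqE -!val_eqE /=.
(* Opposite corners of a square lie on different rungs, so [minn i0 i2] is the lower rung. *)
by case: b0 b1 b2 b3 => [] [] [] [] /= *; exists (minn i0 i2); lia.
Qed.

Lemma c4_in_square (f : 'I_4 -> vertex) : injective f ->
  (forall a b, cycle_adj a b -> adj (f a) (f b)) ->
  exists j i (lt_i1n : i.+1 < n), forall k, f k \in square j lt_i1n.
Proof.
move=> f_inj f_adj.
have same_copy k : (f k).1 = (f (o 0)).1.
  have copy_step a b : cycle_adj a b -> (f a).1 = (f b).1.
    by move=> /f_adj /andP[/eqP].
  have e01 := copy_step (o 0) (o 1) isT; have e12 := copy_step (o 1) (o 2) isT.
  have e23 := copy_step (o 2) (o 3) isT.
  by case: (ord4P k) => ->; rewrite -?e23 -?e12 -?e01.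
have p_inj : injective (fun k => (f k).2).
  move=> a b /= eq2; apply: f_inj.
  by rewrite [f a]surjective_pairing [f b]surjective_pairing eq2 (same_copy a) (same_copy b).
have p_adj a b : cycle_adj a b -> ladder_adj (f a).2 (f b).2 by move/f_adj/andP => [].
have [i lt_i1n idx] := ladder_c4_in_square p_inj p_adj.
by exists (f (o 0)).1, i, lt_i1n => k; rewrite mem_square same_copy eqxx idx.
Qed.

Lemma c4_subgraph_square (V' : {set vertex}) (E' : {set {set vertex}}) :
  iso_subgraph (@cycle_adj 4) adj V' E' ->
  exists j i (lt_i1n : i.+1 < n), V' = square j lt_i1n /\ E' = c4_edges (corner j lt_i1n).
Proof.
case=> f [f_inj -> -> sub]; rewrite -/(c4_edges f).
have f_adj a b : cycle_adj a b -> adj (f a) (f b).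
  by move=> ab; apply/edge_adj/(subsetP sub)/imset2P; exists a b; rewrite ?inE.
have [j [i [lt_i1n in_sq]]] := c4_in_square f_inj f_adj.
exists j, i, lt_i1n; split; apply/eqP; rewrite eqEcard.
  rewrite (card_c4_vertices f_inj) (card_c4_vertices (@corner_inj j i lt_i1n)) andbT.
  by apply/subsetP => _ /imsetP[k _ ->].
rewrite (card_c4_edges f_inj) (card_c4_edges (@corner_inj j i lt_i1n)) andbT.
apply/subsetP => e /imset2P[a b _]; rewrite inE => /andP[_ ab] ->.
exact: square_edge (in_sq a) (in_sq b) (f_adj a b ab).
Qed.

Lemma edge_in_square (e : {set vertex}) : 1 < n -> e \in edges adj ->
  exists j i (lt_i1n : i.+1 < n), e \in c4_edges (corner j lt_i1n).
Proof.
move=> n_gt1 /edge_arc[x [y [xy ->]]].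
(* A rung on the last index lies in the square before it. *)
have lt_i1n : (minn x.2.1 (n - 2)).+1 < n by lia.
exists x.1, _, lt_i1n; apply: square_edge (arc_adj xy); rewrite mem_square;
  by move: xy; rewrite /arc; have := ltn_ord y.2.1; lia.
Qed.

Lemma ladders_covering : 1 < n -> H_covering (@cycle_adj 4) adj.
Proof.
move=> n_gt1 e /(edge_in_square n_gt1)[j [i [lt_i1n e_sq]]].
by exists (square j lt_i1n), (c4_edges (corner j lt_i1n)); split => //; apply: square_iso.
Qed.

Local Notation N := (m * n).
Local Notation Q := (m * (n - 1)).

Definition pos (x : vertex) : nat := x.1 + m * x.2.1.

Lemma pos_lt (x : vertex) : pos x < N.
Proof.
rewrite /pos; case: x => [[j lt_jm] [[i lt_in] b]] /=.
by apply: (@leq_trans (m + m * i)); rewrite ?ltn_add2r // -mulnS leq_mul2l lt_in orbT.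
Qed.

Lemma pos_lt_Q (x : vertex) : (pos x < Q) = ((x.2.1).+1 < n).
Proof.
rewrite /pos; case: x => [[j lt_jm] [[i lt_in] b]] /=.
apply/idP/idP => [lt_Q | lt_i1n].
  rewrite ltnNge; apply: contraL lt_Q => le_n_i1; rewrite -leqNgt.
  by apply: leq_trans (leq_addl _ _); rewrite leq_mul2l; lia.
apply: (@leq_trans (m + m * i)); rewrite ?ltn_add2r // -mulnS leq_mul2l; lia.
Qed.

Lemma pos_inj (x y : vertex) : pos x = pos y -> x.1 = y.1 /\ (x.2.1 : nat) = y.2.1.
Proof.
have pos_mod (z : vertex) : pos z %% m = z.1.
  by rewrite /pos addnC mulnC modnMDl modn_small.
have pos_div (z : vertex) : pos z %/ m = z.2.1.
  have m_gt0 : 0 < m := leq_ltn_trans (leq0n _) (ltn_ord z.1).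
  by rewrite /pos addnC mulnC divnMDl // divn_small ?addn0.
by move=> eq_pos; split; [apply: val_inj; rewrite /= -pos_mod eq_pos pos_mod
                          | rewrite -pos_div eq_pos pos_div].
Qed.

Lemma pos_onto (b : bool) (s : nat) : s < N -> exists x : vertex, x.2.2 = b /\ pos x = s.
Proof.
move=> lt_sN; have m_gt0 : 0 < m by lia.
have lt_s_div : s %/ m < n by rewrite ltn_divLR // mulnC.
exists (Ordinal (ltn_pmod s m_gt0), (Ordinal lt_s_div, b)); split => //.
by rewrite /pos /= mulnC addnC -divn_eq.
Qed.

Lemma rail_successor (x : vertex) : (x.2.1).+1 < n ->
  exists2 y : vertex, arc x y & (y.2.1 : nat) = (x.2.1).+1.
Proof. by move=> lt_i1n; exists (x.1, (Ordinal lt_i1n, x.2.2)); rewrite // /arc /= !eqxx orbT. Qed.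

Definition vertex_label (x : vertex) : nat :=
  if x.2.2 then 2 * N - pos x else (pos x).+1.

Definition arc_label (x y : vertex) : nat :=
  if arc x y then
    if (x.2.1 : nat) == y.2.1 then 2 * N + (pos x).+1
    else if x.2.2 then 3 * N + 2 * Q - pos x else 3 * N + Q - pos x
  else 0.

(* Only the arc orientation of an edge contributes to the double sum. *)
Definition edge_label (e : {set vertex}) : nat :=
  \sum_(x in e) \sum_(y in e) arc_label x y.

Definition ladders_labeling (z : vertex + {set vertex}) : nat :=
  match z with inl x => vertex_label x | inr e => edge_label e end.

Lemma card_vertex : #|{: vertex}| = 2 * N.
Proof. by rewrite !card_prod !card_ord card_bool mulnA mulnC. Qed.

Lemma vertex_label_range (x : vertex) : 1 <= vertex_label x <= 2 * N.
Proof. by have := pos_lt x; rewrite /vertex_label; case: x.2.2; lia. Qed.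

Lemma vertex_label_inj : injective vertex_label.
Proof.
move=> x y eq_xy; have lt_x := pos_lt x; have lt_y := pos_lt y.
have [eq_pos eq_b] : pos x = pos y /\ x.2.2 = y.2.2.
  by move: eq_xy; rewrite /vertex_label; case: x.2.2; case: y.2.2; lia.
have [eq_j eq_i] := pos_inj eq_pos.
by apply/eqP; rewrite vertex_eqE eq_j eq_i eq_b !eqxx.
Qed.

Lemma edge_label_arc (x y : vertex) : arc x y -> edge_label [set x; y] = arc_label x y.
Proof.
move=> xy; have x_notin_y : x \notin [set y] by rewrite inE arc_neq.
have no_loop z : arc_label z z = 0.
  by rewrite /arc_label; case: ifP => // /arc_neq; rewrite eqxx.
have no_back : arc_label y x = 0 by rewrite /arc_label (negPf (arc_asym xy)).
rewrite /edge_label big_setU1 // big_set1 !big_setU1 // !big_set1.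
by rewrite !no_loop no_back !Monoid.simpm.
Qed.

Lemma arc_label_range (x y : vertex) : arc x y ->
  2 * N < arc_label x y <= 2 * N + (N + 2 * Q).
Proof.
move=> xy; have := pos_lt x; have := pos_lt_Q x; have := ltn_ord y.2.1.
by rewrite /arc_label xy; move: xy; rewrite /arc; repeat case: ifP; lia.
Qed.

Lemma arc_label_inj (x1 y1 x2 y2 : vertex) : arc x1 y1 -> arc x2 y2 ->
  arc_label x1 y1 = arc_label x2 y2 -> x1 = x2 /\ y1 = y2.
Proof.
move=> xy1 xy2 eq_label.
have := pos_lt x1; have := pos_lt x2; have := pos_lt_Q x1; have := pos_lt_Q x2.
have := ltn_ord y1.2.1; have := ltn_ord y2.2.1 => lt_y2 lt_y1 rail2 rail1 lt2 lt1.
have [eq_pos eq_b] : pos x1 = pos x2 /\ x1.2.2 = x2.2.2.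
  by move: eq_label; rewrite /arc_label xy1 xy2; move: xy1 xy2; rewrite /arc;
    repeat case: ifP; lia.
have [eq_j eq_i] := pos_inj eq_pos.
have eq_x : x1 = x2 by apply/eqP; rewrite vertex_eqE eq_j eq_i eq_b !eqxx.
split => //; apply/eqP; move: eq_label; rewrite vertex_eqE /arc_label xy1 xy2 -eq_x.
by move: xy1 xy2; rewrite /arc -eq_x; repeat case: ifP; lia.
Qed.

Lemma edge_label_range (e : {set vertex}) : e \in edges adj ->
  2 * N < edge_label e <= 2 * N + (N + 2 * Q).
Proof.
by case/edge_arc=> x [y [xy ->]]; rewrite edge_label_arc //; apply: arc_label_range.
Qed.

Lemma edge_label_inj : {in edges adj &, injective edge_label}.
Proof.
move=> _ _ /edge_arc[x1 [y1 [xy1 ->]]] /edge_arc[x2 [y2 [xy2 ->]]].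
by rewrite !edge_label_arc // => /(arc_label_inj xy1 xy2)[-> ->].
Qed.

Lemma edge_label_onto (k : nat) : k < N + 2 * Q ->
  exists2 e, e \in edges adj & edge_label e = (2 * N).+1 + k.
Proof.
move=> lt_k; have Q_le_N : Q <= N := leq_mul (leqnn m) (leq_subr 1 n).
have rail_edge b s : s < Q -> exists2 e, e \in edges adj &
    edge_label e = 3 * N + (if b then 2 * Q else Q) - s.
  move=> lt_sQ; have [x [x_b pos_x]] := pos_onto b (leq_trans lt_sQ Q_le_N).
  have lt_i1n : (x.2.1).+1 < n by rewrite -pos_lt_Q pos_x.
  have [y xy y_i] := rail_successor lt_i1n.
  exists [set x; y]; first exact: edge_of_arc.
  rewrite edge_label_arc // /arc_label xy y_i x_b pos_x eqn_leq ltnn andbF.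
  by case: b {x_b}.
case: (ltnP k N) => [lt_kN | le_Nk].
  have [x [x_u pos_x]] := pos_onto false lt_kN.
  have xy : arc x (x.1, (x.2.1, true)) by rewrite /arc /= x_u !eqxx.
  exists [set x; (x.1, (x.2.1, true))]; first exact: edge_of_arc.
  by rewrite edge_label_arc // /arc_label xy /= eqxx pos_x addnS.
case: (ltnP k (N + Q)) => [lt_kNQ | le_NQk].
  have [e eE label] := rail_edge false (N + Q - k.+1) (ltac:(lia)).
  by exists e; rewrite ?label; lia.
have [e eE label] := rail_edge true (N + 2 * Q - k.+1) (ltac:(lia)).
by exists e; rewrite ?label; lia.
Qed.

Lemma card_edges : N + 2 * Q <= #|edges adj|.
Proof. exact: leq_card_of_labels edge_label_onto. Qed.

Lemma square_label_sum (j : 'I_m) (i : nat) (lt_i1n : i.+1 < n) :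
  \sum_(v in square j lt_i1n) vertex_label v +
  \sum_(e in c4_edges (corner j lt_i1n)) edge_label e = 14 * N + 3 * Q + m + 4.
Proof.
have inj := @corner_inj j i lt_i1n.
rewrite (sum_c4_vertices inj) (sum_c4_edges inj).
rewrite [[set corner _ _ (o 3); _]]setUC [[set corner _ _ (o 2); _]]setUC.
rewrite !edge_label_arc; try by rewrite /arc /=; lia.
have := pos_lt (corner j lt_i1n (o 1)); have := pos_lt_Q (corner j lt_i1n (o 0)).
rewrite /vertex_label /arc_label /arc /pos /= !eqxx /= (ltn_eqF (ltnSn i)) !orbT mulnS; lia.
Qed.

End Ladders.

Theorem theorem3 (m n : nat) (hm : 2 <= m) (hn : 2 <= n) :
  @H_supermagic _ (@cycle_adj 4) _ (@copies_adj m _ (@ladder_adj n)).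
Proof.
split; first exact: ladders_covering.
have vertex_range (v : 'I_m * ('I_n * bool)) :
    1 <= ladders_labeling (inl v) <= #|{: 'I_m * ('I_n * bool)}|.
  by rewrite card_vertex; apply: vertex_label_range.
exists (@ladders_labeling m n); split.
  2: exact: image_iota_of_inj (@vertex_label_inj m n) vertex_range.
split.
  apply: (total_labeling_split (@vertex_label_inj m n) vertex_range (@edge_label_inj m n)).
  move=> e eE.
  have /andP[lt_label le_label] := edge_label_range eE.
  by rewrite card_vertex lt_label (leq_trans le_label) // leq_add2l card_edges.
exists (14 * (m * n) + 3 * (m * (n - 1)) + m + 4).
by move=> V' E' /c4_subgraph_square[j [i [lt_i1n [-> ->]]]]; apply: square_label_sum.
Qed.
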